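(* For any local epistemic model $\mathcal{M}=(W,\delta,\{R_a\}_{a\in\mathbf{A}},\rho)$, its properization $\mathcal{M}^{pr}$ is a well-defined proper local epistemic model such that for every $w\in W$, $\mathcal{M},w$ and $\mathcal{M}^{pr},[w]_\delta$ are bisimilar (and hence $\mathcal{L}$-logically equivalent). In particular, if $\mathcal{M}$ is already a proper local epistemic model, then $\mathcal{M}$ is isomorphic to $\mathcal{M}^{pr}$.
   Context: Fix a nonempty finite set $\mathbf{A}$ of agents, a countable set $\mathbf{X}$ of variables disjoint from $\mathbf{A}$, and a countable set $\mathbf{P}$ of predicate letters. Formulas of $\mathcal{L}$: $\phi ::= p_x \mid \top \mid \neg\phi \mid (\phi\wedge\phi) \mid [x:=a]\phi \mid \mathsf{K}_X\alpha$ ($p\in\mathbf{P}$, $x\in\mathbf{X}$, $a\in\mathbf{A}$, $X\subseteq\mathbf{X}$ finite, $\alpha$ a formula without free variables), with $FV(p_x)=\{x\}$, $FV(\top)=\emptyset$, $FV$ of $\neg,\wedge$ as usual, $FV([x:=a]\phi)=FV(\phi)\setminus\{x\}$, $FV(\mathsf{K}_X\alpha)=X$; sentences are formulas without free variables. A first-order Kripke model is $\mathcal{M}=(W,\delta,\{R_a\}_{a\in\mathbf{A}},\rho)$ with $W\neq\emptyset$, $\delta:W\to\wp(\mathbf{A})\setminus\{\emptyset\}$, $R_a\subseteq W\times W$ with $R_a(w)=\emptyset$ if $a\notin\delta(w)$, and $\rho:\mathbf{P}\times W\to\wp(\mathbf{A})$ with $\rho(p,w)\subseteq\delta(w)$.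 Semantics with assignments $\sigma:\mathbf{X}\to\mathbf{A}$ admissible (i.e. $\sigma[FV(\phi)]\subseteq\delta(w)$): $\mathcal{M},w,\sigma\vDash p_x$ iff $\sigma(x)\in\rho(p,w)$; Booleans standard; $\mathcal{M},w,\sigma\vDash[x:=a]\phi$ iff ($a\in\delta(w)$ implies $\mathcal{M},w,\sigma[x\mapsto a]\vDash\phi$); $\mathcal{M},w,\sigma\vDash\mathsf{K}_X\alpha$ iff $\mathcal{M},v,\sigma\vDash\alpha$ for all $v\in\bigcap_{a\in\sigma[X]}R_a(w)$ (empty intersection $=W$). Pointed models are $\mathcal{L}$-logically equivalent if they satisfy the same sentences. A bisimulation between $\mathcal{M},\mathcal{N}$ is $Z\subseteq W^{\mathcal M}\times W^{\mathcal N}$ such that for $(w,v)\in Z$: $\delta^{\mathcal M}(w)=\delta^{\mathcal N}(v)$ and $\rho^{\mathcal M}(p,w)=\rho^{\mathcal N}(p,v)$ for all $p$; for all $A\subseteq\mathbf{A}$ and $w'\in\bigcap_{a\in A}R^{\mathcal M}_a(w)$ there is $v'\in\bigcap_{a\in A}R^{\mathcal N}_a(v)$ with $(w',v')\in Z$; and symmetrically. $\mathcal{M},w$ and $\mathcal{N},v$ are bisimilar if some bisimulation contains $(w,v)$. An isomorphism $\mathcal{M}\cong\mathcal{N}$ is a bijection $f:W^{\mathcal M}\to W^{\mathcal N}$ with $\delta^{\mathcal N}(f(w))=\delta^{\mathcal M}(w)$, $\rho^{\mathcal N}(p,f(w))=\rho^{\mathcal M}(p,w)$, and $wR^{\mathcal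 M}_a v\iff f(w)R^{\mathcal N}_a f(v)$. $\mathcal{M}$ is a local epistemic model if: (Local S5) for each $a$, the restriction of $R_a$ to $\{w\mid a\in\delta(w)\}$ is an equivalence relation; (Individually Increasing Domain) if $wR_av$ and $a\in\delta(w)$ then $a\in\delta(v)$; (Local Predicates) if $wR_av$ and $a\in\rho(p,w)$ then $a\in\rho(p,v)$; (Collectively Decreasing Domain) if $v\in\bigcap_{a\in\delta(w)}R_a(w)$ then $\delta(v)\subseteq\delta(w)$. It is proper if moreover $\bigcap_{a\in\delta(w)}R_a(w)=\{w\}$ for all $w$. For a local epistemic model, let $[w]_\delta=\bigcap_{a\in\delta(w)}R_a(w)$. The properization $\mathcal{M}^{pr}=(W^{pr},\delta^{pr},\{R^{pr}_a\},\rho^{pr})$ has $W^{pr}=\{[w]_\delta\mid w\in W\}$, $\delta^{pr}([w]_\delta)=\delta(w)$, $R^{pr}_a=\{([w]_\delta,[v]_\delta)\mid wR_av\}$, and $\rho^{pr}(p,[w]_\delta)=\rho(p,w)$. *)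

From mathcomp Require Import all_boot.
From Stdlib Require Import ClassicalEpsilon.

Set Implicit Arguments.
Unset Strict Implicit.
Unset Printing Implicit Defensive.

Record kstruct (A : finType) (P : Type) := KStruct {
  world : Type;
  kdom   : world -> {set A};
  krel   : A -> world -> world -> Prop;
  kval   : P -> world -> {set A}
}.

Arguments world {A P} k.
Arguments kdom {A P} k _.
Arguments krel {A P} k _ _ _.
Arguments kval {A P} k _ _.

Section Models.
Variables (A : finType) (P : Type).

Definition is_fo_model (M : kstruct A P) : Prop :=
  inhabited (world M) /\
  (forall w, kdom M w != set0) /\
  (forall a w v, a \notin kdom M w -> ~ krel M a w v) /\
  (forall p w, kval M p w \subset kdom M w).

Definition dcls (M : kstruct A P) (w : world M) : world M -> Prop :=
  fun v => forall a, a \in kdom M w -> krel M a w v.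

Definition local_S5 (M : kstruct A P) : Prop :=
  forall a : A,
    (forall w, a \in kdom M w -> krel M a w w) /\
    (forall w v, a \in kdom M w -> a \in kdom M v -> krel M a w v -> krel M a v w) /\
    (forall w v u, a \in kdom M w -> a \in kdom M v -> a \in kdom M u ->
        krel M a w v -> krel M a v u -> krel M a w u).

Definition indiv_increasing_domain (M : kstruct A P) : Prop :=
  forall a w v, krel M a w v -> a \in kdom M w -> a \in kdom M v.

Definition local_predicates (M : kstruct A P) : Prop :=
  forall a w v p, krel M a w v -> a \in kval M p w -> a \in kval M p v.

Definition coll_decreasing_domain (M : kstruct A P) : Prop :=
  forall w v, dcls (M:=M) w v -> kdom M v \subset kdom M w.

Definition local_epistemic (M : kstruct A P) : Prop :=
  is_fo_model M /\ local_S5 M /\ indiv_increasing_domain M /\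
  local_predicates M /\ coll_decreasing_domain M.

Definition proper_model (M : kstruct A P) : Prop :=
  local_epistemic M /\ (forall w v, dcls (M:=M) w v <-> v = w).

(* Bisimulation (intersections over arbitrary sets of agents; the empty
   intersection is the whole set of worlds). *)
Definition bisimulation (M N : kstruct A P) (Z : world M -> world N -> Prop) :=
  forall w v, Z w v ->
    kdom M w = kdom N v /\ (forall p, kval M p w = kval N p v) /\
    (forall (B : {set A}) w', (forall a, a \in B -> krel M a w w') ->
        exists v', (forall a, a \in B -> krel N a v v') /\ Z w' v') /\
    (forall (B : {set A}) v', (forall a, a \in B -> krel N a v v') ->
        exists w', (forall a, a \in B -> krel M a w w') /\ Z w' v').

Definition bisimilar (M N : kstruct A P) (w : world M) (v : world N) :=
  exists Z, bisimulation Z /\ Z w v.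

Definition isomorphic (M N : kstruct A P) : Prop :=
  exists f : world M -> world N, bijective f /\
    (forall w, kdom N (f w) = kdom M w) /\
    (forall p w, kval N p (f w) = kval M p w) /\
    (forall a w v, krel M a w v <-> krel N a (f w) (f v)).

Definition pr_world (M : kstruct A P) : Type :=
  {S : world M -> Prop | exists w, S = dcls (M:=M) w}.

Definition pr_cls (M : kstruct A P) (w : world M) : pr_world M :=
  exist _ (dcls (M:=M) w) (ex_intro _ w erefl).

Definition pr_rep (M : kstruct A P) (S : pr_world M) : world M :=
  proj1_sig (constructive_indefinite_description _ (proj2_sig S)).

Definition properization (M : kstruct A P) : kstruct A P :=
  @KStruct A P (pr_world M)
    (fun S => kdom M (pr_rep S))
    (fun a S T => exists w v, S = pr_cls w /\ T = pr_cls v /\ krel M a w v)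
    (fun p S => kval M p (pr_rep S)).

End Models.

Section Language.
Variables (A : finType) (P : Type) (V : eqType).

Inductive form : Type :=
  | FPred : P -> V -> form
  | FTop : form
  | FNeg : form -> form
  | FAnd : form -> form -> form
  | FAssign : V -> A -> form -> form
  | FK : seq V -> form -> form.  (* K_X alpha, X a finite set of variables *)

Fixpoint fv (f : form) : seq V :=
  match f with
  | FPred _ x => [:: x]
  | FTop => [::]
  | FNeg g => fv g
  | FAnd g h => fv g ++ fv h
  | FAssign x _ g => [seq y <- fv g | y != x]
  | FK X _ => X
  end.

Fixpoint wf (f : form) : bool :=
  match f with
  | FPred _ _ | FTop => true
  | FNeg g => wf g
  | FAnd g h => wf g && wf h
  | FAssign _ _ g => wf g
  | FK _ g => nilp (fv g) && wf g
  end.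

Definition sentence (f : form) : bool := wf f && nilp (fv f).

Definition upd (s : V -> A) (x : V) (a : A) : V -> A :=
  fun y => if y == x then a else s y.

Fixpoint sat (M : kstruct A P) (w : world M) (s : V -> A) (f : form) : Prop :=
  match f with
  | FPred p x => s x \in kval M p w
  | FTop => True
  | FNeg g => ~ sat w s g
  | FAnd g h => sat w s g /\ sat w s h
  | FAssign x a g => a \in kdom M w -> sat w (upd s x a) g
  | FK X g => forall v, (forall x, x \in X -> krel M (s x) w v) -> sat v s g
  end.

Definition sat_sentence (M : kstruct A P) (w : world M) (f : form) : Prop :=
  forall s, sat w s f.

Definition log_equiv (M N : kstruct A P) (w : world M) (v : world N) : Prop :=
  forall f, sentence f -> (sat_sentence w f <-> sat_sentence v f).

End Language.

(* Local S5 together with the two domain conditions makes "v lies in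
   [w]_delta" an equivalence relation whose classes are exactly the sets
   [v]_delta, and worlds in one class share their domain, their valuation and
   their accessibility links. So the properization is the quotient of M by this
   equivalence, its own classes are singletons, and the graph of the quotient
   map w |-> [w]_delta is a bisimulation, which preserves every formula. When M
   is proper the classes are singletons already, and the quotient map is a
   bijection. *)

From Stdlib Require Import ClassicalEpsilon ProofIrrelevance.
From Stdlib Require Import FunctionalExtensionality PropExtensionality.
From mathcomp Require Import all_boot.

Set Implicit Arguments.
Unset Strict Implicit.
Unset Printing Implicit Defensive.

Section Bisimulation.
Variables (A : finType) (P : Type) (V : eqType) (M N : kstruct A P).

Lemma forall_in_map (s : V -> A) (X : seq V) (R : A -> Prop) :
  (forall x, x \in X -> R (s x)) <-> (forall a, a \in [set b in map s X] -> R a).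
Proof.
split=> [HX a | HB x xX]; last by apply: HB; rewrite inE map_f.
by rewrite inE => /mapP[x xX ->]; apply: HX.
Qed.

Lemma bisimulation_sat (Z : world M -> world N -> Prop) :
  bisimulation Z ->
  forall (f : form A P V) w v s, Z w v -> sat w s f <-> sat v s f.
Proof.
move=> HZ f; elim: f => [p x | | g IH | g IHg h IHh | x a g IH | X g IH] w v s Zwv;
  have [Edom [Eval [forth back]]] := HZ w v Zwv => /=.
- by rewrite Eval.
- by [].
- by rewrite (IH w v s Zwv).
- by rewrite (IHg w v s Zwv) (IHh w v s Zwv).
- by rewrite Edom (IH w v _ Zwv).
- split=> Hsat u.
  + move=> /forall_in_map/back[w' [/forall_in_map Hw' Zw'u]].
    by rewrite -(IH w' u s Zw'u); apply: Hsat.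
  + move=> /forall_in_map/forth[v' [/forall_in_map Hv' Zuv']].
    by rewrite (IH u v' s Zuv'); apply: Hsat.
Qed.

Lemma bisimilar_log_equiv (w : world M) (v : world N) :
  bisimilar w v -> log_equiv V w v.
Proof.
move=> [Z [HZ Zwv]] f _.
by split=> H s; apply/(bisimulation_sat HZ f s Zwv).
Qed.

End Bisimulation.

Section Properization.
Variables (A : finType) (P : Type) (M : kstruct A P).
Implicit Types (w v u : world M) (S T : pr_world M).

Lemma pr_world_eq (S T : pr_world M) : sval S = sval T -> S = T.
Proof.
case: S T => [S HS] [T HT] /= ST; subst T.
by congr exist; apply: proof_irrelevance.
Qed.

Lemma pr_cls_rep (S : pr_world M) : pr_cls (pr_rep S) = S.
Proof.
apply: pr_world_eq; rewrite /pr_rep /=.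
by case: constructive_indefinite_description.
Qed.

Lemma pr_clsP (S : pr_world M) : exists w, S = pr_cls w.
Proof. by exists (pr_rep S); rewrite pr_cls_rep. Qed.

Lemma pr_cls_eq (w v : world M) : pr_cls w = pr_cls v <-> dcls w = dcls v.
Proof. by split=> [/(f_equal sval) | wv]; last apply: pr_world_eq. Qed.

Hypotheses (Mfo : is_fo_model M) (MS5 : local_S5 M)
  (Minc : indiv_increasing_domain M) (Mloc : local_predicates M)
  (Mdec : coll_decreasing_domain M).

Lemma krel_kdom a w v : krel M a w v -> a \in kdom M w.
Proof.
have [_ [_ [Mrel _]]] := Mfo.
by move=> wv; apply/negPn/negP => /Mrel/(_ wv).
Qed.

Lemma krel_kdom_r a w v : krel M a w v -> a \in kdom M v.
Proof. by move=> wv; apply: Minc wv (krel_kdom wv). Qed.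

Lemma krel_refl a w : a \in kdom M w -> krel M a w w.
Proof. exact: (MS5 a).1. Qed.

Lemma krel_sym a w v : krel M a w v -> krel M a v w.
Proof. by move=> wv; apply: (MS5 a).2.1 (krel_kdom wv) (krel_kdom_r wv) wv. Qed.

Lemma krel_trans a w v u : krel M a w v -> krel M a v u -> krel M a w u.
Proof.
move=> wv vu.
exact: (MS5 a).2.2 (krel_kdom wv) (krel_kdom vu) (krel_kdom_r vu) wv vu.
Qed.

Lemma dcls_refl w : dcls w w.
Proof. by move=> a; apply: krel_refl. Qed.

Lemma kdom_dcls w v : dcls w v -> kdom M v = kdom M w.
Proof.
move=> wv; apply/eqP; rewrite eqEsubset Mdec //=.
by apply/subsetP => a aw; apply: krel_kdom_r (wv a aw).
Qed.

Lemma kval_dcls p w v : dcls w v -> kval M p v = kval M p w.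
Proof.
have [_ [_ [_ Mval]]] := Mfo.
move=> wv; have vw a : a \in kdom M v -> krel M a v w.
  by rewrite (kdom_dcls wv) => aw; apply/krel_sym/wv.
apply/setP => a; apply/idP/idP => Ha.
- exact: Mloc (vw a (subsetP (Mval p v) a Ha)) Ha.
- exact: Mloc (wv a (subsetP (Mval p w) a Ha)) Ha.
Qed.

Lemma dcls_eqP w v : dcls w v <-> dcls v = dcls w.
Proof.
split=> [wv | <-]; last exact: dcls_refl.
apply: functional_extensionality => u; apply: propositional_extensionality.
split=> Hu a Ha.
- exact: krel_trans (wv a Ha) (Hu a (krel_kdom_r (wv a Ha))).
- rewrite (kdom_dcls wv) in Ha.
  exact: krel_trans (krel_sym (wv a Ha)) (Hu a Ha).
Qed.

Lemma kdom_dcls_eq w v : dcls w = dcls v -> kdom M w = kdom M v.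
Proof. by move=> /dcls_eqP /kdom_dcls. Qed.

Lemma kval_dcls_eq p w v : dcls w = dcls v -> kval M p w = kval M p v.
Proof. by move=> /dcls_eqP /kval_dcls. Qed.

Lemma krel_dcls_eq a w w' v v' :
  dcls w = dcls w' -> dcls v = dcls v' -> krel M a w' v' -> krel M a w v.
Proof.
move=> /dcls_eqP w'w /dcls_eqP v'v wv'.
have ww' := krel_sym (w'w a (krel_kdom wv')).
exact: krel_trans ww' (krel_trans wv' (v'v a (krel_kdom_r wv'))).
Qed.

Lemma dcls_pr_rep w : dcls (pr_rep (pr_cls w)) w.
Proof. by apply/dcls_eqP/pr_cls_eq; rewrite pr_cls_rep. Qed.

Lemma kdom_pr w : kdom (properization M) (pr_cls w) = kdom M w.
Proof. exact/esym/kdom_dcls/dcls_pr_rep. Qed.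

Lemma kval_pr p w : kval (properization M) p (pr_cls w) = kval M p w.
Proof. exact/esym/kval_dcls/dcls_pr_rep. Qed.

Lemma krel_pr a w v :
  krel (properization M) a (pr_cls w) (pr_cls v) <-> krel M a w v.
Proof.
split=> [[w' [v' [/pr_cls_eq ww' [/pr_cls_eq vv' w'v']]]] | wv].
- exact: krel_dcls_eq ww' vv' w'v'.
- by exists w, v.
Qed.

Lemma dcls_pr (S T : world (properization M)) :
  dcls (M := properization M) S T <-> T = S.
Proof.
have [w ->] := pr_clsP S; have [v ->] := pr_clsP T.
rewrite pr_cls_eq -dcls_eqP.
split=> wv a Ha.
- by apply/krel_pr/wv; rewrite kdom_pr.
- by apply/krel_pr/wv; rewrite -(kdom_pr w).
Qed.

Lemma pr_fo_model : is_fo_model (properization M).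
Proof.
have [[w0] [Mne [_ Mval]]] := Mfo.
split; first exact: inhabits (pr_cls w0).
split; first by move=> S; apply: Mne.
split; last by move=> p S; apply: Mval.
move=> a S T; have [w ->] := pr_clsP S; have [v ->] := pr_clsP T.
by rewrite kdom_pr => aw /krel_pr/krel_kdom; rewrite (negbTE aw).
Qed.

Lemma pr_local_S5 : local_S5 (properization M).
Proof.
move=> a; split; [|split].
- move=> S; have [w ->] := pr_clsP S.
  by rewrite kdom_pr => aw; apply/krel_pr/krel_refl.
- move=> S T; have [w ->] := pr_clsP S; have [v ->] := pr_clsP T.
  by move=> _ _ /krel_pr/krel_sym/krel_pr.
- move=> S T U; have [w ->] := pr_clsP S; have [v ->] := pr_clsP T.
  have [u ->] := pr_clsP U.
  by move=> _ _ _ /krel_pr wv /krel_pr vu; apply/krel_pr/(krel_trans wv vu).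
Qed.

Lemma pr_indiv_increasing_domain : indiv_increasing_domain (properization M).
Proof.
move=> a S T; have [w ->] := pr_clsP S; have [v ->] := pr_clsP T.
by rewrite !kdom_pr => /krel_pr/krel_kdom_r.
Qed.

Lemma pr_local_predicates : local_predicates (properization M).
Proof.
move=> a S T p; have [w ->] := pr_clsP S; have [v ->] := pr_clsP T.
by rewrite !kval_pr => /krel_pr; apply: Mloc.
Qed.

Lemma pr_proper_model : proper_model (properization M).
Proof.
split; last exact: dcls_pr.
split; first exact: pr_fo_model.
split; first exact: pr_local_S5.
split; first exact: pr_indiv_increasing_domain.
split; first exact: pr_local_predicates.
by move=> S T /dcls_pr ->.
Qed.

Lemma pr_cls_bisimulation :
  bisimulation (M := M) (N := properization M) (fun w S => S = pr_cls w).
Proof.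
move=> w S ->; split; first by rewrite kdom_pr.
split; first by move=> p; rewrite kval_pr.
split=> [B w' ww' | B T].
- by exists (pr_cls w'); split=> // a aB; apply/krel_pr/ww'.
- have [v ->] := pr_clsP T => wv.
  by exists v; split=> // a aB; apply/krel_pr/wv.
Qed.

Lemma bisimilar_pr_cls w : bisimilar (M := M) (N := properization M) w (pr_cls w).
Proof. by exists (fun w S => S = pr_cls w); split=> //; apply: pr_cls_bisimulation. Qed.

Lemma proper_isomorphic_pr :
  (forall w v, dcls w v <-> v = w) -> isomorphic M (properization M).
Proof.
move=> Mproper.
have pr_cls_inj : injective (@pr_cls _ _ M).
  by move=> w v /pr_cls_eq/esym/dcls_eqP/Mproper.
exists (@pr_cls _ _ M); split.
  exists (@pr_rep _ _ M) => [w | S]; last exact: pr_cls_rep.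
  by apply: pr_cls_inj; rewrite pr_cls_rep.
split; first exact: kdom_pr.
split; first by move=> p w; apply: kval_pr.
by move=> a w v; rewrite krel_pr.
Qed.

End Properization.

Theorem proposition1 (A : finType) (P : countType) (V : countType)
    (M : kstruct A P) :
  0 < #|A| ->
  local_epistemic M ->
  (* the properization is well-defined: delta, rho do not depend on the representative *)
  (forall w w' : world M, dcls (M:=M) w = dcls (M:=M) w' ->
       kdom M w = kdom M w' /\ (forall p, kval M p w = kval M p w')) /\
  (forall w : world M, kdom (properization M) (pr_cls w) = kdom M w /\
       (forall p, kval (properization M) p (pr_cls w) = kval M p w)) /\
  (* it is a proper_model local epistemic model *)
  proper_model (properization M) /\
  (* bisimilarity and logical equivalence *)
  (forall w : world M, bisimilar (M := M) (N := properization M) w (pr_cls w)) /\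
  (forall w : world M,
       log_equiv V (M := M) (N := properization M) w (pr_cls w)) /\
  (proper_model M -> isomorphic M (properization M)).
Proof.
move=> _ [Mfo [MS5 [Minc [Mloc Mdec]]]].
split.
  by move=> w w' ww'; split=> [|p]; [apply: kdom_dcls_eq | apply: kval_dcls_eq].
split; first by move=> w; split=> [|p]; [apply: kdom_pr | apply: kval_pr].
split; first exact: pr_proper_model.
split; first exact: bisimilar_pr_cls.
split; first by move=> w; apply/bisimilar_log_equiv/bisimilar_pr_cls.
by move=> [_ Mproper]; apply: proper_isomorphic_pr.
Qed.
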